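(* Let $\pi$ be a qlg-$2$-sortable permutation. Then: (i) $\pi$ avoids the pattern $3214$; (ii) every occurrence of the pattern $52314$ in $\pi$ can be extended to an occurrence of one of the following patterns, where the dotted entries are the additional entries and the undotted entries form the given occurrence of $52314$: $63\dot{1}425$; $7\dot{2}\dot{1}4536$; $7\dot{3}\dot{1}4526$; $\dot{7}\dot{2}8\dot{1}4536$; $\dot{7}\dot{3}8\dot{1}4526$; $\dot{8}\dot{2}7\dot{1}4536$; $\dot{8}\dot{3}7\dot{1}4526$.
   Context: The $\mathfrak{D}^2\mathfrak{I}$ machine consists of two decreasing stacks $D_1,D_2$ followed in series by an increasing stack $I$. Elements of $D_1,D_2$ must be in decreasing order from top to bottom (top largest); elements of $I$ in increasing order from top to bottom (top smallest). Operations: $d_0$ pushes the next input element into $D_1$; $d_1$ moves the top of $D_1$ to $D_2$; $d_2$ moves the top of $D_2$ to $I$; $d_3$ pops the top of $I$ and appends it to the output. An operation is legal if it respects the stack restrictions; $d_3$ is legal if the popped element is the smallest among the elements not yet output, and also if no other operation is legal. The quasi left-greedy procedure performs at each step the first legal operation in the priority order $d_3\rhd d_1\rhd d_0\rhd d_2$. A permutation is qlg-$2$-sortable if this procedure outputs its elements in increasing order. An occurrence of a pattern with dotted entries extending a given occurrence of $52314$ means a set of entries of $\pi$ forming an occurrence of the full pattern, in which the entries corresponding to the undotted positions are exactly the given occurrence of $52314$. *)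

From mathcomp Require Import all_boot.
Set Implicit Arguments. Unset Strict Implicit. Unset Printing Implicit Defensive.

Definition is_perm (s : seq nat) : bool := perm_eq s (iota 1 (size s)).

(* State of the D^2 I machine.  Stacks are lists whose head is the top. *)
Record state := St { inp : seq nat; d1 : seq nat; d2 : seq nat;
                     istk : seq nat; out : seq nat }.

Definition remaining (st : state) : seq nat :=
  inp st ++ d1 st ++ d2 st ++ istk st.

Definition d0_legal (st : state) : bool :=
  match inp st, d1 st with
  | x :: _, [::] => true
  | x :: _, y :: _ => y < x
  | [::], _ => false
  end.
Definition d1_legal (st : state) : bool :=
  match d1 st, d2 st with
  | x :: _, [::] => true
  | x :: _, y :: _ => y < x
  | [::], _ => false
  end.
Definition d2_legal (st : state) : bool :=
  match d2 st, istk st with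
  | x :: _, [::] => true
  | x :: _, y :: _ => x < y
  | [::], _ => false
  end.
Definition d3_min_legal (st : state) : bool :=
  match istk st with
  | x :: _ => all (fun y => x <= y) (remaining st)
  | [::] => false
  end.

Definition do_d0 (st : state) : state :=
  match inp st with x :: r => St r (x :: d1 st) (d2 st) (istk st) (out st) | [::] => st end.
Definition do_d1 (st : state) : state :=
  match d1 st with x :: r => St (inp st) r (x :: d2 st) (istk st) (out st) | [::] => st end.
Definition do_d2 (st : state) : state :=
  match d2 st with x :: r => St (inp st) (d1 st) r (x :: istk st) (out st) | [::] => st end.
Definition do_d3 (st : state) : state :=
  match istk st with x :: r => St (inp st) (d1 st) (d2 st) r (rcons (out st) x) | [::] => st end.

(* Returns None when no operation is possible (machine is empty). *)
Definition qlg_step (st : state) : option state :=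
  if d3_min_legal st then Some (do_d3 st)
  else if d1_legal st then Some (do_d1 st)
  else if d0_legal st then Some (do_d0 st)
  else if d2_legal st then Some (do_d2 st)
  else if istk st is _ :: _ then Some (do_d3 st)
  else None.

Fixpoint qlg_run (fuel : nat) (st : state) : state :=
  match fuel with
  | 0 => st
  | f.+1 => match qlg_step st with Some st' => qlg_run f st' | None => st end
  end.

Definition init_state (s : seq nat) : state := St s [::] [::] [::] [::].

(* Each element undergoes exactly four operations, so 4n steps suffice. *)
Definition qlg_output (s : seq nat) : seq nat :=
  out (qlg_run (4 * size s) (init_state s)).

Definition qlg2_sortable (s : seq nat) : bool :=
  qlg_output s == sort leq s.

Definition occurrence (p s idx : seq nat) : Prop :=
  [/\ sorted ltn idx, size idx = size p, all (fun i => i < size s) idx &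
      forall a b, a < size p -> b < size p ->
        (nth 0 s (nth 0 idx a) < nth 0 s (nth 0 idx b)) = (nth 0 p a < nth 0 p b)].

Definition avoids (p s : seq nat) : Prop := forall idx, ~ occurrence p s idx.

(* A dotted pattern: the pattern together with a mask marking dotted entries. *)
Definition dpattern := (seq nat * seq bool)%type.

Definition extends_to (s idx : seq nat) (P : dpattern) : Prop :=
  exists J, occurrence P.1 s J /\ mask (map negb P.2) J = idx.

Definition dotted_list : seq dpattern :=
  [:: ([:: 6; 3; 1; 4; 2; 5], [:: false; false; true; false; false; false]);
      ([:: 7; 2; 1; 4; 5; 3; 6], [:: false; true; true; false; false; false; false]);
      ([:: 7; 3; 1; 4; 5; 2; 6], [:: false; true; true; false; false; false; false]);
      ([:: 7; 2; 8; 1; 4; 5; 3; 6], [:: true; true; false; true; false; false; false; false]);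
      ([:: 7; 3; 8; 1; 4; 5; 2; 6], [:: true; true; false; true; false; false; false; false]);
      ([:: 8; 2; 7; 1; 4; 5; 3; 6], [:: true; true; false; true; false; false; false; false]);
      ([:: 8; 3; 7; 1; 4; 5; 2; 6], [:: true; true; false; true; false; false; false; false])].

From mathcomp Require Import all_boot zify.
From Stdlib Require Import Classical.
Set Implicit Arguments. Unset Strict Implicit. Unset Printing Implicit Defensive.

(* A state is doomed once its output is out of
   order or precedes a smaller element still in the machine; doom persists, so
   on a sortable permutation no reachable state is doomed, while after 4n steps
   the machine is empty.  Each claim is therefore refuted by a property of
   states that every undoomed move preserves and that keeps some element inside
   the machine.  The terminal trap is a jam: an element of I with a smaller and
   a larger element not yet in I.  It is reached through a wedge: x < y in D1
   and D2 with a larger element upstream and an element below x still unread,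
   so that y or its larger successor enters I before that element.  For
   3214 = c b a d the element c gets trapped; for an occurrence E B C A D of
   52314 the trap is built around B, and each way B could escape produces one
   of the listed extensions. *)

Lemma gtn_trans : transitive gtn. Proof. exact: rev_trans ltn_trans. Qed.

Lemma sorted_gtn_head h t y : sorted gtn (h :: t) -> y \in t -> y < h.
Proof. by move/(order_path_min gtn_trans)/allP/(_ y). Qed.

Lemma sorted_ltn_head h t y : sorted ltn (h :: t) -> y \in t -> h < y.
Proof. by move/(order_path_min ltn_trans)/allP/(_ y). Qed.

Lemma sorted_leq_rcons s x z : sorted leq (rcons s x) -> z \in s -> z <= x.
Proof.
rewrite -rev_sorted rev_rcons /= => /(order_path_min (rev_trans leq_trans))/allP Hs Hz.
by apply: Hs; rewrite mem_rev.
Qed.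

Lemma sorted_gtn_le h t y : sorted gtn (h :: t) -> y \in h :: t -> y <= h.
Proof. by move=> Hs; rewrite in_cons => /predU1P [-> //|/(sorted_gtn_head Hs)/ltnW]. Qed.

Lemma sorted_ltn_ge h t y : sorted ltn (h :: t) -> y \in h :: t -> h <= y.
Proof. by move=> Hs; rewrite in_cons => /predU1P [-> //|/(sorted_ltn_head Hs)/ltnW]. Qed.

Lemma sorted_gtn_cons x s : (forall t, t \in s -> t < x) -> sorted gtn s -> sorted gtn (x :: s).
Proof. by case: s => //= h t Hs ->; rewrite andbT Hs ?mem_head. Qed.

Lemma sorted_ltn_cons x s : (forall t, t \in s -> x < t) -> sorted ltn s -> sorted ltn (x :: s).
Proof. by case: s => //= h t Hs ->; rewrite andbT Hs ?mem_head. Qed.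

Lemma not_ltn_neq_ltn (a b : nat) : a != b -> ~~ (b < a) -> a < b.
Proof. by rewrite -leqNgt leq_eqVlt => /negbTE ->. Qed.

(* The values of vs, listed by the rank that p gives their positions: vs is
   order-isomorphic to the permutation p exactly when this list increases. *)
Definition ranked (p vs : seq nat) : seq nat := [seq nth 0 vs (index k p) | k <- iota 1 (size p)].

Lemma sorted_ltn_nth_mono (s : seq nat) : sorted ltn s ->
  {in [pred n | n < size s] &, {mono nth 0 s : i j / i < j}}.
Proof. by move=> Hs; apply/leqW_mono_in/leq_mono_in/(sorted_ltn_nth ltn_trans). Qed.

Section Patterns.

Variable p : seq nat.
Hypothesis Hp : is_perm p.

Lemma mem_perm_pattern k : (k \in p) = (0 < k <= size p).
Proof. by rewrite (perm_mem Hp) mem_iota add1n ltnS. Qed.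

Lemma nth_ranked vs k : k < size p -> nth 0 (ranked p vs) k = nth 0 vs (index k.+1 p).
Proof. by move=> Hk; rewrite (nth_map 0) ?size_iota // nth_iota. Qed.

Lemma order_iso_rankedP vs :
  (forall a b, a < size p -> b < size p -> (nth 0 vs a < nth 0 vs b) = (nth 0 p a < nth 0 p b))
  <-> sorted ltn (ranked p vs).
Proof.
have Hu : uniq p by rewrite (perm_uniq Hp) iota_uniq.
have Hin a : a < size p -> 0 < nth 0 p a <= size p by move=> Ha; rewrite -mem_perm_pattern mem_nth.
split=> [Hiso | Hs a b Ha Hb].
  apply/(sortedP 0) => i; rewrite size_map size_iota => Hi.
  have Hk k : 0 < k <= size p -> index k p < size p by rewrite index_mem mem_perm_pattern.
  rewrite /= !nth_ranked ?(ltnW Hi) // Hiso ?Hk ?(ltnW Hi) //.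
  by rewrite !nth_index ?mem_perm_pattern ?ltnS ?(ltnW Hi).
have Erk c : c < size p -> nth 0 vs c = nth 0 (ranked p vs) (nth 0 p c).-1.
  move=> Hc; have /andP [H0 Hn] := Hin c Hc.
  by rewrite nth_ranked ?prednK ?index_uniq //; lia.
have /andP [Ha0 Ha1] := Hin a Ha; have /andP [Hb0 Hb1] := Hin b Hb.
rewrite (Erk a) // (Erk b) // sorted_ltn_nth_mono ?inE ?size_map ?size_iota //; lia.
Qed.

End Patterns.

Lemma occurrenceP p s idx : is_perm p -> occurrence p s idx <->
  [/\ sorted ltn idx, size idx = size p, all (fun i => i < size s) idx &
      sorted ltn (ranked p [seq nth 0 s i | i <- idx])].
Proof.
move=> Hp; split=> -[Hs Hsz Hall H]; split=> //.
  by apply/(order_iso_rankedP Hp) => a b Ha Hb; rewrite !(nth_map 0) ?Hsz // H.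
by move/(order_iso_rankedP Hp): H => H a b Ha Hb; rewrite -H // !(nth_map 0) ?Hsz.
Qed.

Lemma occurrence_of_values p s vs : is_perm p -> size vs = size p -> all (mem s) vs ->
  sorted ltn [seq index x s | x <- vs] -> sorted ltn (ranked p vs) ->
  occurrence p s [seq index x s | x <- vs].
Proof.
move=> Hp Hsz Hin Hs Hr; apply/occurrenceP => //; split; rewrite ?size_map //.
  by rewrite all_map; apply: sub_all Hin => x /= Hx; rewrite index_mem.
by rewrite -map_comp map_id_in // => x /(allP Hin) /(nth_index 0).
Qed.

Lemma occurrence_values p s idx : is_perm p -> uniq s -> occurrence p s idx ->
  exists vs, [/\ idx = [seq index x s | x <- vs], size vs = size p, all (mem s) vs,
                 sorted ltn [seq index x s | x <- vs] & sorted ltn (ranked p vs)].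
Proof.
move=> Hp Hu /(occurrenceP _ _ Hp) [Hs Hsz Hall Hr]; exists [seq nth 0 s i | i <- idx].
have Eidx : [seq index x s | x <- [seq nth 0 s i | i <- idx]] = idx.
  by rewrite -map_comp map_id_in // => i /(allP Hall) Hi /=; rewrite index_uniq.
rewrite Eidx size_map; split=> //.
by rewrite all_map; apply: sub_all Hall => i /= Hi; rewrite mem_nth.
Qed.

Lemma extends_to_of_values s (P : dpattern) vs : is_perm P.1 -> size vs = size P.1 ->
  all (mem s) vs -> sorted ltn [seq index x s | x <- vs] -> sorted ltn (ranked P.1 vs) ->
  extends_to s [seq index x s | x <- mask (map negb P.2) vs] P.
Proof.
move=> *; exists [seq index x s | x <- vs].
by split; [exact: occurrence_of_values | rewrite map_mask].
Qed.

Section Moves.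

Implicit Types (pi : seq nat) (st : state).

(* The moves the quasi left-greedy procedure can make, each with the facts
   that make it legal and those that made every higher-priority move illegal. *)
Variant qlg_move st : state -> Prop :=
| MovePop x r : istk st = x :: r ->
    qlg_move st (St (inp st) (d1 st) (d2 st) r (rcons (out st) x))
| MoveD1 x r : d1 st = x :: r -> (forall t, t \in d2 st -> t < x) ->
    qlg_move st (St (inp st) r (x :: d2 st) (istk st) (out st))
| MoveD0 x r : inp st = x :: r -> (forall t, t \in d1 st -> t < x) -> d1_legal st = false ->
    qlg_move st (St r (x :: d1 st) (d2 st) (istk st) (out st))
| MoveD2 x r : d2 st = x :: r -> (forall t, t \in istk st -> x < t) ->
    d1_legal st = false -> d0_legal st = false ->
    qlg_move st (St (inp st) (d1 st) r (x :: istk st) (out st)).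

Record wf_state pi st : Prop := WfState {
  wf_uniq : uniq (remaining st ++ out st);
  wf_perm : perm_eq (remaining st ++ out st) pi;
  wf_inp : exists k, inp st = drop k pi;
  wf_d1 : sorted gtn (d1 st);
  wf_d2 : sorted gtn (d2 st);
  wf_istk : sorted ltn (istk st) }.

Lemma wf_init pi : is_perm pi -> wf_state pi (init_state pi).
Proof.
move=> Hp; have Hu : uniq pi by rewrite (perm_uniq Hp) iota_uniq.
by constructor; rewrite /remaining /= ?cats0 //; exists 0; rewrite drop0.
Qed.

Lemma qlg_step_move pi st st' : wf_state pi st -> qlg_step st = Some st' -> qlg_move st st'.
Proof.
case=> _ _ _ S1 S2 SI; rewrite /qlg_step.
case: ifP => [|_].
  rewrite /d3_min_legal /do_d3.
  by case: (istk st) (@MovePop st) => [|x r] // Hmv _ [<-]; apply: Hmv.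
case: ifP => [H1|N1].
  move: H1 S2; rewrite /d1_legal /do_d1; case E1: (d1 st) => [|x r] //.
  case E2: (d2 st) => [|y t] H S2 [<-]; rewrite -E2; apply: MoveD1 => // z; rewrite E2 //.
  by move/(sorted_gtn_le S2)/leq_ltn_trans; apply.
case: ifP => [H0|N0].
  move: H0 S1 N1; rewrite /d0_legal /do_d0; case Ei: (inp st) => [|x r] //.
  case E1: (d1 st) => [|y t] H S1 N1 [<-]; rewrite -E1; apply: MoveD0 => // z; rewrite E1 //.
  by move/(sorted_gtn_le S1)/leq_ltn_trans; apply.
case: ifP => [H2|N2].
  move: H2 SI; rewrite /d2_legal /do_d2; case E2: (d2 st) => [|x r] //.
  case EI: (istk st) => [|y t] H SI [<-]; rewrite -EI; apply: MoveD2 => // z; rewrite EI //.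
  by move/(sorted_ltn_ge SI); apply: leq_trans.
by rewrite /do_d3; case: (istk st) (@MovePop st) => [|x r] // Hmv [<-]; apply: Hmv.
Qed.

Lemma perm_move st st' : qlg_move st st' ->
  perm_eq (remaining st' ++ out st') (remaining st ++ out st).
Proof.
rewrite /remaining; case=> [x r E|x r E _|x r E _ _|x r E _ _ _]; rewrite E /= -?cats1;
 apply/permP => p; rewrite ?count_cat /= ?count_cat /=; lia.
Qed.

Lemma drop_cons_next (s : seq nat) k x r : drop k s = x :: r -> drop k.+1 s = r.
Proof. by move=> H; rewrite -add1n -drop_drop H drop1. Qed.

Lemma wf_move pi st st' : wf_state pi st -> qlg_move st st' -> wf_state pi st'.
Proof.
move=> [Uu Up [k Ud] S1 S2 SI] K; have Hp := perm_move K.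
constructor.
- by rewrite (perm_uniq Hp).
- exact: perm_trans Hp Up.
- case: K Ud => /= [x r E|x r E _|x r E _ _|x r E _ _ _] Ud; try by exists k.
  by exists k.+1; apply/esym/(drop_cons_next (x := x)); rewrite -Ud E.
- case: K => /= [x r E|x r E _|x r E Hx _|x r E _ _ _] //; last exact: sorted_gtn_cons.
  by move: S1; rewrite E => /path_sorted.
- case: K => /= [x r E|x r E Hx|x r E _ _|x r E _ _ _] //; first exact: sorted_gtn_cons.
  by move: S2; rewrite E => /path_sorted.
- case: K => /= [x r E|x r E Hx|x r E _ _|x r E Hx _ _] //; last exact: sorted_ltn_cons.
  by move: SI; rewrite E => /path_sorted.
Qed.

End Moves.

Definition doomed (st : state) : bool :=
  ~~ sorted leq (out st) || has (fun x => has (ltn^~ x) (remaining st)) (out st).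

Lemma doomed_pop st x r y : istk st = x :: r -> y \in remaining st -> y < x ->
  doomed (St (inp st) (d1 st) (d2 st) r (rcons (out st) x)).
Proof.
move=> E Hy Hyx; apply/orP; right; apply/hasP; exists x; first by rewrite mem_rcons mem_head.
apply/hasP; exists y => //; move: Hy; rewrite /remaining E /= !mem_cat in_cons.
by rewrite (ltn_eqF Hyx).
Qed.

Lemma doomed_eq st st' : out st' = out st -> remaining st' =i remaining st ->
  doomed st' = doomed st.
Proof.
by move=> Ho Hr; rewrite /doomed Ho; congr (_ || _); apply: eq_has => x; apply: eq_has_r.
Qed.

Lemma doomed_move st st' : doomed st -> qlg_move st st' -> doomed st'.
Proof.
move=> HB K; case: K HB => [x r E|x r E _|x r E _ _|x r E _ _ _] HB.
2-4: by rewrite (doomed_eq (st := st)) //; apply: perm_mem; rewrite /remaining E /=;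
  apply/permP => p; rewrite !count_cat /= ?count_cat /=; lia.
case/orP: HB => [Hns|/hasP [z Hz /hasP [y Hy /= Hyz]]].
  apply/orP; left; apply: contra Hns; apply: subseq_sorted; [exact: leq_trans|exact: subseq_rcons].
case: (eqVneq y x) => [Eyx|Hne].
  by apply/orP; left; apply/negP => /sorted_leq_rcons/(_ Hz); rewrite -Eyx; lia.
apply/orP; right; apply/hasP; exists z; first by rewrite mem_rcons in_cons Hz orbT.
apply/hasP; exists y => //; move: Hy; rewrite /remaining E /= !mem_cat in_cons (negbTE Hne) //.
Qed.

(* Each element still has to make one move per stack it has not yet left. *)
Definition weight (st : state) : nat :=
  4 * size (inp st) + 3 * size (d1 st) + 2 * size (d2 st) + size (istk st).

Lemma weight_move st st' : qlg_move st st' -> (weight st').+1 = weight st.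
Proof. by case=> [x r E|x r E _|x r E _ _|x r E _ _ _]; rewrite /weight E /=; lia. Qed.

Lemma qlg_step_None st : qlg_step st = None -> remaining st = [::].
Proof.
rewrite /qlg_step; case: ifP => // _; case: ifP => // H1; case: ifP => // H0; case: ifP => // H2.
case EI: (istk st) => [|x r] // _.
move: H2; rewrite /d2_legal EI; case E2: (d2 st) => [|y t] //= _.
move: H1; rewrite /d1_legal E2; case E1: (d1 st) => // _.
move: H0; rewrite /d0_legal E1; case Ei: (inp st) => // _.
by rewrite /remaining Ei E1 E2 EI.
Qed.

Lemma qlg_run_empty pi f st : wf_state pi st -> weight st <= f ->
  remaining (qlg_run f st) = [::].
Proof.
elim: f st => [|f IH] st HU Hm /=.
  move: Hm; rewrite /weight /remaining leqn0.
  by case: (inp st) => [|??]; case: (d1 st) => [|??]; case: (d2 st) => [|??];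
    case: (istk st) => [|??] //=; lia.
case E: (qlg_step st) => [st'|]; last exact: qlg_step_None.
have K := qlg_step_move HU E; apply: IH; first exact: wf_move K.
by have := weight_move K; lia.
Qed.

Lemma uniq_cat_memF (s1 s2 : seq nat) x : uniq (s1 ++ s2) -> x \in s1 -> x \in s2 -> False.
Proof. by rewrite cat_uniq => /and3P [_ /hasPn H _] H1 /H; rewrite H1. Qed.

Lemma index_drop_uniq (s : seq nat) k x : uniq s -> x \in drop k s ->
  index x s = k + index x (drop k s).
Proof.
move=> Hu Hx.
have Hk : k <= size s by rewrite leqNgt; apply: contraTN Hx => /ltnW/drop_oversize ->.
have Hnt : x \notin take k s.
  by move: Hu; rewrite -{1}(cat_take_drop k s) cat_uniq => /and3P [_ /hasPn /(_ x Hx)].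
by rewrite -{1}(cat_take_drop k s) index_cat (negbTE Hnt) size_takel.
Qed.

Section Positions.

Variables (pi : seq nat) (st : state).
Hypothesis Hwf : wf_state pi st.

Lemma wf_uniq_stacks : uniq (inp st ++ d1 st ++ d2 st ++ istk st ++ out st).
Proof. by move: (wf_uniq Hwf); rewrite /remaining -!catA. Qed.

Lemma wf_uniq_pi : uniq pi.
Proof. by rewrite -(perm_uniq (wf_perm Hwf)) (wf_uniq Hwf). Qed.

Lemma wf_mem_pi x : x \in remaining st ++ out st -> x \in pi.
Proof. by rewrite (perm_mem (wf_perm Hwf)). Qed.

Lemma d1_d2_disjoint x : x \in d1 st -> x \in d2 st -> False.
Proof.
move: wf_uniq_stacks; rewrite cat_uniq => /and3P [_ _ Hu] H1 H2.
by apply: (uniq_cat_memF Hu H1); rewrite mem_cat H2.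
Qed.

Lemma index_inp_ge k x : inp st = drop k pi -> x \in inp st -> k <= index x pi.
Proof. by move=> Hd; rewrite Hd => Hx; rewrite (index_drop_uniq wf_uniq_pi Hx) leq_addr. Qed.

Lemma index_inp_head k x r : inp st = drop k pi -> inp st = x :: r -> index x pi = k.
Proof.
move=> Hd E; have Hx : x \in drop k pi by rewrite -Hd E mem_head.
by rewrite (index_drop_uniq wf_uniq_pi Hx) -Hd E /= eqxx addn0.
Qed.

Lemma inp_of_index_ge k x : inp st = drop k pi -> x \in pi -> k <= index x pi -> x \in inp st.
Proof.
move=> Hd Hx Hk; rewrite Hd -(nth_index 0 Hx) -(subnKC Hk) -nth_drop.
apply: mem_nth; rewrite size_drop ltn_sub2r // ?index_mem //.
by apply: leq_ltn_trans Hk _; rewrite index_mem.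
Qed.

Lemma index_read_lt k x : inp st = drop k pi ->
  x \in d1 st ++ d2 st ++ istk st ++ out st -> index x pi < k.
Proof.
move=> Hd Hx; rewrite ltnNge; apply/negP => Hk.
have Hpi : x \in pi by apply: wf_mem_pi; rewrite /remaining -!catA mem_cat Hx orbT.
exact: uniq_cat_memF wf_uniq_stacks (inp_of_index_ge Hd Hpi Hk) Hx.
Qed.

Lemma index_read_lt_inp x y : y \in d1 st ++ d2 st ++ istk st ++ out st -> x \in inp st ->
  index y pi < index x pi.
Proof.
case: (wf_inp Hwf) => k Hd Hy Hx.
exact: leq_trans (index_read_lt Hd Hy) (index_inp_ge Hd Hx).
Qed.

Lemma inp_read_neq x y : x \in inp st -> y \in d1 st ++ d2 st ++ istk st ++ out st -> x != y.
Proof. by move=> Hx Hy; apply/eqP => Exy; subst y; apply: uniq_cat_memF wf_uniq_stacks Hx Hy. Qed.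

Lemma inp_later b y : b \in inp st -> y \in pi -> index b pi < index y pi -> y \in inp st.
Proof.
case: (wf_inp Hwf) => k Hd Hb Hy Hby.
exact: inp_of_index_ge Hd Hy (leq_trans (index_inp_ge Hd Hb) (ltnW Hby)).
Qed.

Lemma inp_head_index_le x r y : inp st = x :: r -> y \in inp st -> index x pi <= index y pi.
Proof. by case: (wf_inp Hwf) => k Hd E /(index_inp_ge Hd); rewrite (index_inp_head Hd E). Qed.

Lemma inp_behead_later x r y : inp st = x :: r -> y \in pi -> index x pi < index y pi -> y \in r.
Proof.
move=> E Hy Hxy; have := inp_later (b := x) _ Hy Hxy.
rewrite E !in_cons => /(_ (mem_head _ _)) /predU1P [Eyx|//].
by move: Hxy; rewrite Eyx ltnn.
Qed.

Lemma inp_head_index_lt x r y : inp st = x :: r -> y \in inp st -> y != x ->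
  index x pi < index y pi.
Proof.
move=> E Hy Hne; rewrite ltn_neqAle (inp_head_index_le E Hy) andbT.
apply: contra Hne => /eqP Exy; apply/eqP/esym/(@index_inj _ 0 pi) => //.
  by apply: wf_mem_pi; rewrite /remaining E !mem_cat mem_head.
by apply: wf_mem_pi; rewrite /remaining !mem_cat Hy.
Qed.

End Positions.

Lemma inp_behead st x r y : inp st = x :: r -> y \in inp st -> y != x -> y \in r.
Proof. by move=> E; rewrite E in_cons => /predU1P [->|]; rewrite ?eqxx. Qed.

(* w is a larger element that sat in D2 when x was read and so barred x from
   D2; it supplies the third element of a guard triple. *)
Definition d1_blocked (pi : seq nat) (st : state) : Prop := forall x, x \in d1 st ->
  (exists2 w, w \in d2 st ++ istk st & x < w /\ index w pi < index x pi) \/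
  (x = head 0 (d1 st) /\ forall t, t \in d2 st -> t < x).

Lemma d1_blocked_move pi st st' : wf_state pi st -> d1_blocked pi st -> qlg_move st st' ->
  doomed st' \/ d1_blocked pi st'.
Proof.
move=> HU HG K; case: K => [x0 r E|x0 r E Hx|x0 r E Hx H1|x0 r E Hx H1 H0].
- case Hh: (has (ltn^~ x0) (d1 st)).
    left; case/hasP: Hh => y Hy Hyx; apply: (doomed_pop E _ Hyx).
    by rewrite /remaining !mem_cat Hy orbT.
  right => y /= Hy; case: (HG y Hy) => [[w Hw [Hyw Hp]]|H]; last by right.
  left; exists w => //; move: Hw; rewrite !mem_cat E in_cons.
  case: (eqVneq w x0) => [Ew|_] //=.
  by move: Hh => /hasPn /(_ y Hy); rewrite -Ew /= Hyw.
- right => y /= Hy.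
  have Hy1 : y \in d1 st by rewrite E in_cons Hy orbT.
  case: (HG y Hy1) => [[w Hw [Hyw Hp]]|[Eh _]].
    by left; exists w; rewrite ?in_cons ?Hw ?orbT.
  by have := wf_d1 HU; rewrite E => /sorted_gtn_head/(_ Hy); rewrite Eh E /= ltnn.
- right => y /=; rewrite in_cons; case: (eqVneq y x0) => [->|Hne] /= Hy.
    have Hx0 : x0 \in inp st by rewrite E mem_head.
    case Hh: (has (ltn x0) (d2 st)).
      case/hasP: Hh => w Hw Hxw; left; exists w; first by rewrite mem_cat Hw.
      by split => //; apply: (index_read_lt_inp HU _ Hx0); rewrite !mem_cat Hw orbT.
    right; split => // t Ht; apply: not_ltn_neq_ltn; last by move/hasPn: Hh => /(_ t Ht).
    by rewrite eq_sym; apply: (inp_read_neq HU Hx0); rewrite !mem_cat Ht orbT.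
  case: (HG y Hy) => [H|[Eh Hall]]; first by left.
  exfalso; move: H1; rewrite /d1_legal; case E1: (d1 st) Eh => [|h t] Eh; first by rewrite E1 in Hy.
  rewrite /= in Eh; subst h; case E2: (d2 st) Hall => [//|t2 r2] Hall.
  by rewrite Hall ?mem_head.
- right => y /= Hy; case: (HG y Hy) => [[w Hw [Hyw Hp]]|[Eh Hall]].
    by left; exists w => //; move: Hw; rewrite !mem_cat E !in_cons; case: (w == x0); rewrite ?orbT.
  by right; split => // t Ht; apply: Hall; rewrite E in_cons Ht orbT.
Qed.

Lemma not_sortable_of_invariant pi (Inv : state -> Prop) :
  is_perm pi -> Inv (init_state pi) ->
  (forall st st', wf_state pi st -> d1_blocked pi st -> Inv st -> qlg_move st st' ->
     doomed st' \/ Inv st') ->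
  (forall st, Inv st -> remaining st <> [::]) ->
  ~ qlg2_sortable pi.
Proof.
move=> Hp HI Hstep Hne Hs.
pose P st := wf_state pi st /\ (doomed st \/ (d1_blocked pi st /\ Inv st)).
have Hrun f st : P st -> P (qlg_run f st).
  elim: f st => [|f IH] st [HU HB] //=; case E: (qlg_step st) => [st'|] //; apply: IH.
  have K := qlg_step_move HU E; split; first exact: wf_move K.
  case: HB => [HB|[HG HC]]; first by left; exact: doomed_move HB K.
  case: (d1_blocked_move HU HG K) => [|HG']; first by left.
  by case: (Hstep _ _ HU HG HC K) => [|HC']; [left | right].
have HP0 : P (init_state pi) by split; [exact: wf_init | right].
have [_ Hfin] := Hrun (4 * size pi) _ HP0.
have Hem : remaining (qlg_run (4 * size pi) (init_state pi)) = [::].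
  by apply: (qlg_run_empty (wf_init Hp)); rewrite /weight /=; lia.
case: Hfin => [|[_ HC]]; last exact: Hne _ HC Hem.
rewrite /doomed Hem => /orP [|/hasP [x _] //].
move: Hs; rewrite /qlg2_sortable /qlg_output => /eqP ->.
by rewrite sort_sorted //; exact: leq_total.
Qed.

Definition upstream (st : state) : seq nat := inp st ++ d1 st ++ d2 st.

Lemma mem_upstream st y : (y \in upstream st) = [|| y \in inp st, y \in d1 st | y \in d2 st].
Proof. by rewrite /upstream !mem_cat. Qed.

Lemma upstream_remaining st y : y \in upstream st -> y \in remaining st.
Proof. by rewrite mem_upstream /remaining !mem_cat => /or3P [->|->|->]; rewrite ?orbT. Qed.

Lemma mem_cat_cons_swap (r s : seq nat) x y : (y \in r ++ x :: s) = (y \in (x :: r) ++ s).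
Proof. by rewrite !mem_cat !in_cons; case: (y == x); rewrite ?orbT. Qed.

Lemma upstream_moveD1 st x r : d1 st = x :: r ->
  upstream (St (inp st) r (x :: d2 st) (istk st) (out st)) =i upstream st.
Proof. by move=> E y; rewrite /upstream /= mem_cat [in RHS]mem_cat mem_cat_cons_swap -E. Qed.

Lemma upstream_moveD0 st x r : inp st = x :: r ->
  upstream (St r (x :: d1 st) (d2 st) (istk st) (out st)) =i upstream st.
Proof. by move=> E y; rewrite /upstream /= mem_cat_cons_swap -E. Qed.

(* c can neither leave I, as the smaller a has not been output, nor let the
   larger d pass into I. *)
Definition jammed st := exists c a d,
  [/\ c \in istk st, a \in upstream st, d \in upstream st, a < c & c < d].

Lemma jammed_move pi st st' : wf_state pi st -> jammed st -> qlg_move st st' ->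
  doomed st' \/ jammed st'.
Proof.
move=> HU [c [a [d [Hc Ha Hd Hac Hcd]]]] K.
case: K => [x0 r E|x0 r E _|x0 r E _ _|x0 r E Hx H1 H0].
- case: (eqVneq c x0) => [Ec|Hne].
    by left; apply: (doomed_pop E (upstream_remaining Ha)); rewrite -Ec.
  by right; exists c, a, d; split => //=; move: Hc; rewrite E in_cons (negbTE Hne).
- by right; exists c, a, d; rewrite !(upstream_moveD1 E).
- by right; exists c, a, d; rewrite !(upstream_moveD0 E).
have S2 := wf_d2 HU; rewrite E in S2.
have Hxc : x0 < c by apply: Hx.
have Hdne : d != x0 by rewrite neq_ltn (ltn_trans Hxc Hcd) orbT.
case: (eqVneq a x0) => [Ea|Hane]; last first.
  right; exists c, a, d; split => //=; first by rewrite in_cons Hc orbT.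
    by move: Ha; rewrite !mem_upstream E in_cons (negbTE Hane).
  by move: Hd; rewrite !mem_upstream E in_cons (negbTE Hdne).
(* a enters I; the top of D1, smaller than a, takes over its role *)
subst a.
have Hd2 : d \in inp st \/ d \in d1 st.
  move: Hd; rewrite mem_upstream E in_cons (negbTE Hdne) /=.
  case/or3P => [->|->|Hr]; [by left|by right|].
  by have := sorted_gtn_head S2 Hr; lia.
case E1: (d1 st) => [|h t].
  exfalso; case: Hd2 => [Hi|]; last by rewrite E1.
  by move: H0; rewrite /d0_legal E1; case: (inp st) Hi.
have Hhx : h < x0.
  apply: not_ltn_neq_ltn; last by move: H1; rewrite /d1_legal E1 E => ->.
  by apply/eqP => Eh; apply: (d1_d2_disjoint HU (x := h)); rewrite ?E1 ?E Eh mem_head.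
right; rewrite -E1; exists c, h, d; split => //=.
- by rewrite in_cons Hc orbT.
- by rewrite mem_upstream E1 mem_head orbT.
- by rewrite mem_upstream; case: Hd2 => ->; rewrite ?orbT.
- exact: ltn_trans Hhx Hxc.
Qed.

Definition wedged pi a dmax st := exists x y d,
  [/\ x \in d1 st, y \in d1 st ++ d2 st, d \in upstream st & [/\ a < x, x < y, y < d & d <= dmax]]
  /\ [/\ a \in inp st, index a pi < index dmax pi & dmax \in pi].

Lemma wedged_move pi a dmax st st' : wf_state pi st -> wedged pi a dmax st -> qlg_move st st' ->
  doomed st' \/ wedged pi a dmax st' \/ jammed st'.
Proof.
move=> HU [x [y [d [[Hx Hy Hd [Hax Hxy Hyd Hdm]] [Ha Ham Hm]]]]] K.
have Hmi : dmax \in inp st := inp_later HU Ha Hm Ham.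
case: K => [x0 r E|x0 r E Hx0|x0 r E Hx0 _|x0 r E Hx0 _ _].
- by right; left; exists x, y, d.
- have Hne : x != x0.
    apply/eqP => Ex; subst x0; move: Hy; rewrite mem_cat => /orP [|/Hx0]; last by lia.
    have := wf_d1 HU; rewrite E in_cons => S1 /predU1P [Eyx|/(sorted_gtn_head S1)]; last by lia.
    by move: Hxy; rewrite Eyx ltnn.
  right; left; exists x, y, d; split => //; split => //=.
  + by move: Hx; rewrite E in_cons (negbTE Hne).
  + by rewrite mem_cat_cons_swap -E.
  + by rewrite (upstream_moveD1 E).
- have Har : a \in r.
    by apply: (inp_behead E Ha); apply/eqP => Ea; subst x0; have := Hx0 _ Hx; lia.
  right; left; exists x, y, d; split => //; split => //=.
  + by rewrite in_cons Hx orbT.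
  + by rewrite /= in_cons Hy orbT.
  + by rewrite (upstream_moveD0 E).
have S2 := wf_d2 HU; rewrite E in S2.
case: (eqVneq y x0) => [Ey|Hyne].
  subst x0; right; right; exists y, a, d; split => //=.
  - by rewrite mem_head.
  - by rewrite mem_upstream Ha.
  - move: Hd; rewrite !mem_upstream E in_cons; case: (eqVneq d y) => [Edy|_] //=.
    by move: Hyd; rewrite Edy ltnn.
  - exact: ltn_trans Hax Hxy.
case: (eqVneq d x0) => [Ed|Hdne].
  subst x0; right; right; exists d, a, dmax; split => //=.
  - by rewrite mem_head.
  - by rewrite mem_upstream Ha.
  - by rewrite mem_upstream Hmi.
  - exact: ltn_trans Hax (ltn_trans Hxy Hyd).
  - rewrite ltn_neqAle Hdm andbT eq_sym; apply: (inp_read_neq HU Hmi).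
    by rewrite !mem_cat E mem_head orbT.
right; left; exists x, y, d; split => //; split => //=.
- by move: Hy; rewrite !mem_cat E in_cons (negbTE Hyne).
- by move: Hd; rewrite !mem_upstream E in_cons (negbTE Hdne).
Qed.

Section Avoid3214.

Variables (pi : seq nat) (c b a d : nat).
Hypotheses (Hab : a < b) (Hbc : b < c) (Hcd : c < d).
Hypotheses (Ha : a \in pi) (Hb : b \in pi) (Hd : d \in pi).
Hypotheses (Pcb : index c pi < index b pi) (Pba : index b pi < index a pi)
  (Pad : index a pi < index d pi).

Definition stuck_3214 st :=
  [\/ c \in inp st, (c \in d1 st \/ c \in d2 st) /\ b \in inp st, wedged pi a d st | jammed st].

Lemma stuck_3214_move st st' : wf_state pi st -> stuck_3214 st -> qlg_move st st' ->
  doomed st' \/ stuck_3214 st'.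
Proof.
move=> HU [Hc|[Hc Hbi]|HZ|HJ].
- case=> [x0 r E|x0 r E _|x0 r E Hx0 _|x0 r E _ _ _]; try by right; apply: Or41.
  case: (eqVneq c x0) => [Ec|Hne]; last by right; apply/Or41/(inp_behead E Hc Hne).
  subst x0; right; apply: Or42; split; first by left; rewrite mem_head.
  exact: (inp_behead_later HU E).
- case=> [x0 r E|x0 r E Hx0|x0 r E Hx0 _|x0 r E Hx0 _ _].
  + by right; apply: Or42.
  + right; apply: Or42; split => //=; case: Hc => Hc; last by right; rewrite in_cons Hc orbT.
    by move: Hc; rewrite E in_cons => /predU1P [->|Hr]; [right; rewrite mem_head|left].
  + case: (eqVneq b x0) => [Eb|Hne]; last first.
      right; apply: Or42; split => /=; last exact: (inp_behead E Hbi Hne).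
      by case: Hc => Hc; [left; rewrite in_cons Hc orbT|right].
    subst x0; case: Hc => Hc; first by have := Hx0 _ Hc; lia.
    right; apply: Or43; exists b, c, d; split; split => //=.
    * by rewrite mem_head.
    * by rewrite in_cons mem_cat Hc !orbT.
    * by rewrite mem_upstream /= (inp_behead_later HU E) // (ltn_trans Pba Pad).
    * exact: (inp_behead_later HU E).
  + case: (eqVneq c x0) => [Ec|Hne].
      subst x0; right; apply: Or44; exists c, a, d; split => /=.
      * by rewrite mem_head.
      * by rewrite mem_upstream (inp_later HU Hbi Ha Pba).
      * by rewrite mem_upstream (inp_later HU Hbi Hd (ltn_trans Pba Pad)).
      * exact: ltn_trans Hab Hbc.
      * exact: Hcd.
    right; apply: Or42; split => //=; case: Hc => Hc; first by left.
    by right; move: Hc; rewrite E in_cons (negbTE Hne).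
- move=> K; case: (wedged_move HU HZ K) => [|[HZ'|HJ']]; first by left.
    by right; apply: Or43.
  by right; apply: Or44.
- by move=> K; case: (jammed_move HU HJ K) => [|HJ']; [left | right; apply: Or44].
Qed.

Lemma stuck_3214_nonempty st : stuck_3214 st -> remaining st <> [::].
Proof.
rewrite /remaining => HC E.
have Hnin y : y \in inp st ++ d1 st ++ d2 st ++ istk st -> False by rewrite E.
case: HC => [Hc|[_ Hbi]|[x [y [dd [_ [Hai _ _]]]]]|[c' [a' [d' [_ Ha' _ _ _]]]]].
- by apply: (Hnin c); rewrite mem_cat Hc.
- by apply: (Hnin b); rewrite mem_cat Hbi.
- by apply: (Hnin a); rewrite mem_cat Hai.
- by apply: (Hnin a'); apply: upstream_remaining.
Qed.

End Avoid3214.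

Lemma qlg2_sortable_avoids_3214 pi : is_perm pi -> qlg2_sortable pi -> avoids [:: 3; 2; 1; 4] pi.
Proof.
move=> Hp Hs idx Hocc.
have Hu : uniq pi by rewrite (perm_uniq Hp) iota_uniq.
have [vs [_ Hsz Hin Hpos Hval]] := occurrence_values (isT : is_perm [:: 3; 2; 1; 4]) Hu Hocc.
case: vs Hsz Hin Hpos Hval => [|c [|b [|a [|d [|]]]]] //= _.
rewrite !andbT => /and4P [Hc Hb Ha Hd] /and3P [Pcb Pba Pad] /and3P [Hab Hbc Hcd].
apply: (not_sortable_of_invariant (Inv := stuck_3214 pi c b a d)) Hs => //.
- by apply: Or41.
- by move=> st st' HU _; apply: stuck_3214_move.
- exact: stuck_3214_nonempty.
Qed.

Section Extend52314.

Variables (pi : seq nat) (E B C A D : nat).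
Hypotheses (HAB : A < B) (HBC : B < C) (HCD : C < D) (HDE : D < E).
Hypotheses (PEB : index E pi < index B pi) (PBC : index B pi < index C pi)
  (PCA : index C pi < index A pi) (PAD : index A pi < index D pi).
Hypotheses (HEpi : E \in pi) (HCpi : C \in pi) (HApi : A \in pi) (HDpi : D \in pi).

(* The occurrence E B C A D of 52314 extends to none of the listed patterns:
   no extension to 631425 ... *)
Hypothesis no_ext631425 : forall x, x \in pi ->
  index B pi < index x pi < index C pi -> x < A -> False.
(* ... nor to 7214536 or 7314526 ... *)
Hypothesis no_ext7 : forall y z, y \in pi -> z \in pi ->
  index E pi < index y pi < index z pi -> index z pi < index B pi ->
  z < A -> z < y < B -> False.
(* ... nor to any of the four patterns of length 8. *)
Hypothesis no_ext8 : forall w y z, w \in pi -> y \in pi -> z \in pi ->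
  index w pi < index y pi < index E pi -> index E pi < index z pi < index B pi ->
  D < w -> z < A -> z < y < B -> False.

Definition B_pending st := exists x, [/\ x \in inp st, index x pi < index C pi, A < x, x < B &
  (B \in d1 st \/ B \in d2 st)].

Definition B_held st := [/\ B \in d1 st, C \in inp st &
  (exists2 z, z \in d2 st & B < z) \/ head 0 (d1 st) != B].

Definition guard_triple u v w :=
  [/\ v < u < w, index w pi < index u pi < index v pi & index E pi < index v pi < index B pi].

Definition guard_placed u v w st :=
  [\/ [/\ u \in d1 st, v \in inp st & (w \in d2 st \/ w \in istk st)],
      [/\ u \in d2 st, v \in inp st & w \in istk st] |
      [/\ u \in d2 st, v \in d1 st & w \in istk st]].

(* What will stop B once it is read, E having already reached I. *)
Definition E_guarded st := (exists u, (u \in d1 st \/ u \in d2 st) /\ B < u) \/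
  (exists u v w, guard_triple u v w /\ guard_placed u v w st).

Definition pre_B st := B \in inp st /\
  [\/ E \in inp st, E \in d1 st, E \in d2 st | E \in istk st /\ E_guarded st].

Variant stuck_52314 st : Prop :=
| StuckPre of pre_B st
| StuckHeld of B_held st
| StuckPending of B_pending st
| StuckWedged of wedged pi A D st
| StuckJammed of jammed st.

Lemma wedged_jammed_move st st' : wf_state pi st -> wedged pi A D st \/ jammed st ->
  qlg_move st st' -> doomed st' \/ stuck_52314 st'.
Proof.
move=> HU [HZ|HJ] K; last by case: (jammed_move HU HJ K) => [|?]; [left|right; apply: StuckJammed].
case: (wedged_move HU HZ K) => [|[?|?]]; first by left.
  by right; apply: StuckWedged.
by right; apply: StuckJammed.
Qed.

Lemma B_pending_move st st' : wf_state pi st -> B_pending st -> qlg_move st st' ->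
  doomed st' \/ stuck_52314 st'.
Proof.
move=> HU [x [Hx PxC HAx HxB HBl]] K.
have HC : C \in inp st := inp_later HU Hx HCpi PxC.
have HA : A \in inp st := inp_later HU Hx HApi (ltn_trans PxC PCA).
right; case: K => [x0 r E0|x0 r E0 Hx0|x0 r E0 Hx0 H1|x0 r E0 Hx0 H1 H0].
- by apply: StuckPending; exists x.
- apply: StuckPending; exists x; split => //=.
  case: HBl => HB; last by right; rewrite in_cons HB orbT.
  by move: HB; rewrite E0 in_cons => /predU1P [->|?]; [right; rewrite mem_head|left].
- case: (eqVneq x x0) => [Ex|Hne].
    subst x0; case: HBl => HB; first by have := Hx0 _ HB; lia.
    apply: StuckWedged; exists x, B, C; split; split => //=.
    * by rewrite mem_head.
    * by rewrite in_cons mem_cat HB !orbT.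
    * by rewrite mem_upstream /= (inp_behead_later HU E0 HCpi PxC).
    * by split => //; apply: ltnW.
    * exact: (inp_behead_later HU E0 HApi (ltn_trans PxC PCA)).
  apply: StuckPending; exists x; split => //=; first exact: (inp_behead E0 Hx Hne).
  by case: HBl => HB; [left; rewrite in_cons HB orbT|right].
- case: (eqVneq B x0) => [EB|Hne].
    by subst x0; apply: StuckJammed; exists B, A, C; rewrite /= mem_head !mem_upstream HA HC.
  apply: StuckPending; exists x; split => //=.
  by case: HBl => HB; [left|right; move: HB; rewrite E0 in_cons (negbTE Hne)].
Qed.

Lemma B_held_move st st' : wf_state pi st -> B_held st -> qlg_move st st' ->
  doomed st' \/ stuck_52314 st'.
Proof.
move=> HU [HB HC Halt] K.
right; case: K => [x0 r E0|x0 r E0 Hx0|x0 r E0 Hx0 H1|x0 r E0 Hx0 H1 H0].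
- by apply: StuckHeld.
- case: (eqVneq B x0) => [EB|Hne].
    exfalso; subst x0; case: Halt => [[z Hz HBz]|]; last by rewrite E0 /= eqxx.
    by have := Hx0 _ Hz; lia.
  have HBr : B \in r by move: HB; rewrite E0 in_cons (negbTE Hne).
  have := wf_d1 HU; rewrite E0 => /sorted_gtn_head/(_ HBr) HBx.
  by apply: StuckHeld; split => //=; left; exists x0; rewrite ?mem_head.
- case: (eqVneq C x0) => [EC|Hne].
    subst x0; apply: StuckWedged; exists B, C, D; split; split => //=.
    * by rewrite in_cons HB orbT.
    * exact: mem_head.
    * by rewrite mem_upstream /= (inp_behead_later HU E0 HDpi (ltn_trans PCA PAD)).
    * exact: (inp_behead_later HU E0 HApi PCA).
  apply: StuckHeld; split => //=.
  + by rewrite in_cons HB orbT.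
  + exact: (inp_behead E0 HC Hne).
  + by right; apply: (inp_read_neq HU); rewrite ?E0 ?mem_head // mem_cat HB.
case Hc: (has (ltn B) r || (head 0 (d1 st) != B)).
  apply: StuckHeld; split => //=; case/orP: Hc => [/hasP [z Hz HBz]|->]; last by right.
  by left; exists z.
move/negbT: Hc; rewrite negb_or negbK => /andP [_ /eqP Hh].
case Ei: (inp st) HC => [|x r1] HC //.
case E1: (d1 st) Hh HB => [|h t] //= Hh HB; subst h.
have Hxi : x \in inp st by rewrite Ei mem_head.
have HxB : x < B.
  apply: not_ltn_neq_ltn; last by move: H0; rewrite /d0_legal Ei E1 => ->.
  by apply: (inp_read_neq HU Hxi); rewrite E1 mem_head.
have PxC : index x pi < index C pi.
  by apply: (inp_head_index_lt HU Ei); rewrite ?Ei // neq_ltn (ltn_trans HxB HBC) orbT.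
have PBx : index B pi < index x pi by apply: (index_read_lt_inp HU _ Hxi); rewrite E1 mem_head.
have Hxpi : x \in pi by apply: (wf_mem_pi HU); rewrite /remaining Ei !mem_cat mem_head.
have HAx : A < x.
  rewrite ltnNge leq_eqVlt; apply/negP => /orP [/eqP Ex|Hlt].
    by subst x; have := ltn_trans PxC PCA; rewrite ltnn.
  by apply: (no_ext631425 Hxpi) => //; rewrite PBx PxC.
by apply: StuckPending; exists x; split => //=; [rewrite mem_head | left; rewrite mem_head].
Qed.

Lemma E_guarded_moveD2 st x0 r : wf_state pi st -> d1_blocked pi st -> B \in inp st ->
  E \in d2 st ++ istk st -> d2 st = x0 :: r -> d1_legal st = false -> d0_legal st = false ->
  E_guarded (St (inp st) (d1 st) r (x0 :: istk st) (out st)).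
Proof.
move=> HU HG HB HE E2 H1 H0.
case Ei: (inp st) HB => [|v r1] HB //; rewrite -Ei.
have Hv : v \in inp st by rewrite Ei mem_head.
case E1: (d1 st) H1 H0 => [|u t] H1 H0; first by move: H0; rewrite /d0_legal Ei E1.
rewrite -E1; have Hu : u \in d1 st by rewrite E1 mem_head.
have Hvu : v < u.
  apply: not_ltn_neq_ltn; first by apply: (inp_read_neq HU Hv); rewrite mem_cat Hu.
  by move: H0; rewrite /d0_legal Ei E1 => ->.
have Hux : u < x0.
  apply: not_ltn_neq_ltn; last by move: H1; rewrite /d1_legal E1 E2 => ->.
  by apply/eqP => Eu; apply: (d1_d2_disjoint HU Hu); rewrite E2 Eu mem_head.
case: (HG u Hu) => [[w Hw [Huw Pwu]]|[_ Hall]]; last first.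
  by have := Hall x0; rewrite E2 mem_head => /(_ isT); lia.
case: (eqVneq v B) => [EvB|HvB]; first by left; exists u; split; [left | rewrite -EvB].
have PvB : index v pi < index B pi.
  by apply: (inp_head_index_lt HU Ei); rewrite ?Ei // eq_sym.
have PEv : index E pi < index v pi.
  apply: (index_read_lt_inp HU _ Hv); rewrite !mem_cat.
  by move: HE; rewrite mem_cat => /orP [->|->]; rewrite ?orbT.
right; exists u, v, w; split; first split.
- by rewrite Hvu Huw.
- by rewrite Pwu (index_read_lt_inp HU _ Hv) // mem_cat Hu.
- by rewrite PEv PvB.
apply: Or31; split => //=; move: Hw; rewrite mem_cat E2 !in_cons.
by case/orP => [/predU1P [->|Hr]|Hi]; [right; rewrite eqxx | left | right; rewrite Hi orbT].
Qed.

Lemma readB_held st r z : C \in r -> z \in d2 st -> B < z ->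
  stuck_52314 (St r (B :: d1 st) (d2 st) (istk st) (out st)).
Proof. by move=> HC Hz HBz; apply: StuckHeld; split; rewrite /= ?mem_head //; left; exists z. Qed.

Lemma readB_guarded st r u v w : wf_state pi st -> inp st = B :: r -> guard_triple u v w ->
  [/\ u \in d2 st, v \in d1 st & w \in istk st] ->
  stuck_52314 (St r (B :: d1 st) (d2 st) (istk st) (out st)).
Proof.
move=> HU Ei [/andP [Hvu Huw] /andP [Pwu Puv] /andP [PEv PvB]] [Hu Hv Hw].
have PBA := ltn_trans PBC PCA; have PBD := ltn_trans PBA PAD.
have HC : C \in r := inp_behead_later HU Ei HCpi PBC.
have HA : A \in r := inp_behead_later HU Ei HApi PBA.
have HD : D \in r := inp_behead_later HU Ei HDpi PBD.
have HAi : A \in inp st by rewrite Ei in_cons HA orbT.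
have HDi : D \in inp st by rewrite Ei in_cons HD orbT.
case Hh: (has (ltn B) (d2 st)); first by case/hasP: Hh => z; apply: readB_held.
have HuB : u < B.
  apply: not_ltn_neq_ltn; last by move/hasPn: Hh => /(_ u Hu).
  by rewrite eq_sym; apply: (inp_read_neq HU (x := B)); rewrite ?Ei ?mem_head // !mem_cat Hu orbT.
have Hupi : u \in pi by apply: (wf_mem_pi HU); rewrite /remaining !mem_cat Hu !orbT.
have Hvpi : v \in pi by apply: (wf_mem_pi HU); rewrite /remaining !mem_cat Hv !orbT.
have Hwpi : w \in pi by apply: (wf_mem_pi HU); rewrite /remaining !mem_cat Hw !orbT.
have Hwread : w \in d1 st ++ d2 st ++ istk st ++ out st by rewrite !mem_cat Hw !orbT.
case: (ltngtP A v) => [HAv|HvA|EAv].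
- apply: StuckWedged; exists v, B, C; split; split; rewrite /= ?in_cons ?Hv ?eqxx ?orbT //.
  + by rewrite mem_upstream HC.
  + by split => //; [exact: ltn_trans Hvu HuB | exact: ltnW].
- case: (ltngtP (index E pi) (index u pi)) => [PEu|PuE|EEu].
  + by case: (no_ext7 Hupi Hvpi); rewrite ?PEu ?Puv ?Hvu ?HuB.
  + case: (ltngtP D w) => [HDw|HwD|EDw].
    * by case: (no_ext8 Hwpi Hupi Hvpi); rewrite ?Pwu ?PuE ?PEv ?PvB ?Hvu ?HuB.
    * case: (ltngtP A w) => [HAw|HwA|EAw].
      - by apply: StuckJammed; exists w, A, D; rewrite !mem_upstream /= HA HD.
      - apply: StuckJammed; exists w, u, B; rewrite !mem_upstream /= Hu mem_head !orbT.
        by split => //; exact: ltn_trans HwA HAB.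
      - by move: (inp_read_neq HU HAi Hwread); rewrite EAw eqxx.
    * by move: (inp_read_neq HU HDi Hwread); rewrite EDw eqxx.
  + move: HuB; rewrite -(index_inj 0 HEpi Hupi EEu) => /ltn_trans/(_ (ltn_trans HBC HCD)).
    by move/ltn_trans/(_ HDE); rewrite ltnn.
- by move: (inp_read_neq HU HAi (y := v)); rewrite EAv eqxx mem_cat Hv => /(_ isT).
Qed.

Lemma pre_B_readB st r : wf_state pi st -> pre_B st -> inp st = B :: r ->
  (forall t, t \in d1 st -> t < B) ->
  stuck_52314 (St r (B :: d1 st) (d2 st) (istk st) (out st)).
Proof.
move=> HU [_ HEs] Ei HBtop.
have HC : C \in r := inp_behead_later HU Ei HCpi PBC.
have HBE : B < E := ltn_trans HBC (ltn_trans HCD HDE).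
case: HEs => [HE|HE|HE|[HE [[u [[Hu|Hu] HBu]]|[u [v [w [Htr HL]]]]]]].
- by have := leq_ltn_trans (inp_head_index_le HU Ei HE) PEB; rewrite ltnn.
- by have := ltn_trans (HBtop _ HE) HBE; rewrite ltnn.
- exact: readB_held HE HBE.
- by have := ltn_trans (HBtop _ Hu) HBu; rewrite ltnn.
- exact: readB_held Hu HBu.
have [_ _ /andP [_ PvB]] := Htr.
case: HL => [[Hu Hv Hw]|[Hu Hv Hw]|HL]; last exact: readB_guarded HU Ei Htr HL.
1-2: by have := leq_ltn_trans (inp_head_index_le HU Ei Hv) PvB; rewrite ltnn.
Qed.


Lemma pre_B_pop st x0 r : pre_B st -> istk st = x0 :: r ->
  doomed (St (inp st) (d1 st) (d2 st) r (rcons (out st) x0)) \/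
  pre_B (St (inp st) (d1 st) (d2 st) r (rcons (out st) x0)).
Proof.
move=> [HB HEs] E0.
case: HEs => [HE|HE|HE|[HE HPS]].
- by right; split => //; apply: Or41.
- by right; split => //; apply: Or42.
- by right; split => //; apply: Or43.
case: (eqVneq E x0) => [EE|HEne].
  left; apply: (doomed_pop E0 (y := B)); first by rewrite /remaining !mem_cat HB.
  by rewrite -EE (ltn_trans HBC (ltn_trans HCD HDE)).
have HE' : E \in r by move: HE; rewrite E0 in_cons (negbTE HEne).
case: HPS => [Hbig|[u [v [w [Htr HL]]]]].
  by right; split => //; apply: Or44; split => //; left.
have [/andP [_ Huw] _ _] := Htr.
have Hu : u \in remaining st by case: HL => -[Hu _ _]; rewrite /remaining !mem_cat Hu ?orbT.
case: (eqVneq w x0) => [Ew|Hwne]; first by left; apply: (doomed_pop E0 Hu); rewrite -Ew.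
have Hw' : w \in istk st -> w \in r by rewrite E0 in_cons (negbTE Hwne).
right; split => //; apply: Or44; split => //; right; exists u, v, w; split => //.
case: HL => [[Hu' Hv [Hw|Hw]]|[Hu' Hv Hw]|[Hu' Hv Hw]].
- by apply: Or31; split => //; left.
- by apply: Or31; split => //; right; apply: Hw'.
- by apply: Or32; split => //; apply: Hw'.
- by apply: Or33; split => //; apply: Hw'.
Qed.

Lemma pre_B_moveD1 st x0 r : pre_B st -> d1 st = x0 :: r ->
  (forall t, t \in d2 st -> t < x0) ->
  pre_B (St (inp st) r (x0 :: d2 st) (istk st) (out st)).
Proof.
move=> [HB HEs] E0 Hx0; split => //=.
have Hd1 y : y \in d1 st -> y != x0 -> y \in r.
  by rewrite E0 in_cons => /predU1P [->|]; rewrite ?eqxx.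
case: HEs => [HE|HE|HE|[HE HPS]].
- exact: Or41.
- case: (eqVneq E x0) => [->|Hne]; first by apply: Or43; rewrite mem_head.
  by apply/Or42/Hd1.
- by apply: Or43; rewrite in_cons HE orbT.
apply: Or44; split => //.
case: HPS => [[u [[Hu|Hu] HBu]]|[u [v [w [Htr HL]]]]].
- left; exists u; split => //=; case: (eqVneq u x0) => [->|Hne]; first by right; rewrite mem_head.
  by left; apply: Hd1.
- by left; exists u; split => //=; right; rewrite in_cons Hu orbT.
right; exists u, v, w; split => //.
have [/andP [Hvu Huw] _ _] := Htr.
case: HL => [[Hu Hv Hw]|[Hu Hv Hw]|[Hu Hv Hw]].
- case: (eqVneq u x0) => [Eu|Hne].
    subst x0; case: Hw => Hw; first by have := Hx0 _ Hw; rewrite ltnNge ltnW.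
    by apply: Or32; split; rewrite /= ?mem_head.
  apply: Or31; split => //=; first exact: Hd1.
  by case: Hw => Hw; [left; rewrite in_cons Hw orbT | right].
- by apply: Or32; split => //=; rewrite in_cons Hu orbT.
- apply: Or33; split => //=; first by rewrite in_cons Hu orbT.
  apply: Hd1 => //; apply/eqP => Ev; subst x0.
  by have := Hx0 _ Hu; rewrite ltnNge ltnW.
Qed.

Lemma pre_B_moveD0 st x0 r : pre_B st -> inp st = x0 :: r ->
  (forall t, t \in d1 st -> t < x0) -> x0 != B ->
  pre_B (St r (x0 :: d1 st) (d2 st) (istk st) (out st)).
Proof.
move=> [HB HEs] E0 Hx0 HBne; split => /=; first by apply: (inp_behead E0 HB); rewrite eq_sym.
case: HEs => [HE|HE|HE|[HE HPS]].
- case: (eqVneq E x0) => [->|Hne]; first by apply: Or42; rewrite mem_head.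
  by apply/Or41/(inp_behead E0 HE).
- by apply: Or42; rewrite in_cons HE orbT.
- exact: Or43.
apply: Or44; split => //.
case: HPS => [[u [[Hu|Hu] HBu]]|[u [v [w [Htr HL]]]]].
- by left; exists u; split => //=; left; rewrite in_cons Hu orbT.
- by left; exists u; split => //=; right.
right; exists u, v, w; split => //.
have [/andP [Hvu _] _ _] := Htr.
case: HL => [[Hu Hv Hw]|[Hu Hv Hw]|[Hu Hv Hw]].
- apply: Or31; split => //; first by rewrite in_cons Hu orbT.
  apply: (inp_behead E0 Hv); apply/eqP => Ev; subst x0.
  by have := Hx0 _ Hu; rewrite ltnNge ltnW.
- case: (eqVneq v x0) => [->|Hne]; first by apply: Or33; split; rewrite /= ?mem_head.
  by apply: Or32; split => //; apply: (inp_behead E0 Hv).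
- by apply: Or33; split => //; rewrite in_cons Hv orbT.
Qed.

Lemma pre_B_moveD2 st x0 r : wf_state pi st -> d1_blocked pi st -> pre_B st ->
  d2 st = x0 :: r -> d1_legal st = false -> d0_legal st = false ->
  pre_B (St (inp st) (d1 st) r (x0 :: istk st) (out st)).
Proof.
move=> HU HG [HB HEs] E0 H1 H0; split => //=.
case: HEs => [HE|HE|HE|[HE _]].
- exact: Or41.
- exact: Or42.
- case: (eqVneq E x0) => [EE|Hne]; last by apply: Or43; move: HE; rewrite E0 in_cons (negbTE Hne).
  apply: Or44; split; first by rewrite EE mem_head.
  by apply: (E_guarded_moveD2 HU HG HB _ E0 H1 H0); rewrite mem_cat HE.
apply: Or44; split; first by rewrite in_cons HE orbT.
by apply: (E_guarded_moveD2 HU HG HB _ E0 H1 H0); rewrite mem_cat HE orbT.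
Qed.

Lemma pre_B_move st st' : wf_state pi st -> d1_blocked pi st -> pre_B st -> qlg_move st st' ->
  doomed st' \/ stuck_52314 st'.
Proof.
move=> HU HG HP; case=> [x0 r E0|x0 r E0 Hx0|x0 r E0 Hx0 H1|x0 r E0 Hx0 H1 H0].
- by case: (pre_B_pop HP E0) => [|?]; [left | right; apply: StuckPre].
- by right; apply/StuckPre/(pre_B_moveD1 HP E0 Hx0).
- case: (eqVneq x0 B) => [EB|HBne]; first by subst x0; right; apply: pre_B_readB.
  by right; apply/StuckPre/(pre_B_moveD0 HP E0 Hx0 HBne).
- by right; apply/StuckPre/(pre_B_moveD2 HU HG HP E0 H1 H0).
Qed.

Lemma stuck_52314_move st st' : wf_state pi st -> d1_blocked pi st -> stuck_52314 st ->
  qlg_move st st' -> doomed st' \/ stuck_52314 st'.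
Proof.
move=> HU HG [H|H|H|H|H] K.
- exact: pre_B_move HU HG H K.
- exact: B_held_move HU H K.
- exact: B_pending_move HU H K.
- by apply: wedged_jammed_move HU _ K; left.
- by apply: wedged_jammed_move HU _ K; right.
Qed.

Lemma stuck_52314_nonempty st : stuck_52314 st -> remaining st <> [::].
Proof.
rewrite /remaining => HC Em.
have Hnin y : y \in inp st ++ d1 st ++ d2 st ++ istk st -> False by rewrite Em.
case: HC => [[HB _]|[_ HC _]|[x [Hx _ _ _ _]]|[x [y [dd [_ [HA _ _]]]]]|[c [a [d [_ Ha _ _ _]]]]].
- by apply: (Hnin B); rewrite mem_cat HB.
- by apply: (Hnin C); rewrite mem_cat HC.
- by apply: (Hnin x); rewrite mem_cat Hx.
- by apply: (Hnin A); rewrite mem_cat HA.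
- by apply: (Hnin a); apply: upstream_remaining.
Qed.

End Extend52314.

Section Unextended52314.

Variables (pi : seq nat) (E B C A D : nat).
Hypotheses (HEpi : E \in pi) (HBpi : B \in pi) (HCpi : C \in pi) (HApi : A \in pi)
  (HDpi : D \in pi).
Hypotheses (PEB : index E pi < index B pi) (PBC : index B pi < index C pi)
  (PCA : index C pi < index A pi) (PAD : index A pi < index D pi).
Hypotheses (HAB : A < B) (HBC : B < C) (HCD : C < D) (HDE : D < E).
Hypothesis unextended : ~ exists2 P, P \in dotted_list &
  extends_to pi [:: index E pi; index B pi; index C pi; index A pi; index D pi] P.

Lemma unextended_values P vs : P \in dotted_list -> is_perm P.1 -> size vs = size P.1 ->
  all (mem pi) vs -> sorted ltn [seq index x pi | x <- vs] -> sorted ltn (ranked P.1 vs) ->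
  mask (map negb P.2) vs = [:: E; B; C; A; D] -> False.
Proof.
move=> HP HPp Hsz Hin Hpos Hval Hmask; apply: unextended; exists P => //.
by move: (extends_to_of_values HPp Hsz Hin Hpos Hval); rewrite Hmask.
Qed.

Lemma unextended_631425 x : x \in pi -> index B pi < index x pi < index C pi -> x < A -> False.
Proof.
move=> Hx /andP [P1 P2] HxA.
apply: (unextended_values
          (P := ([:: 6; 3; 1; 4; 2; 5], [:: false; false; true; false; false; false]))
          (vs := [:: E; B; x; C; A; D])) => //=;
by repeat (apply/andP; split).
Qed.

Lemma unextended_7 y z : y \in pi -> z \in pi -> index E pi < index y pi < index z pi ->
  index z pi < index B pi -> z < A -> z < y < B -> False.
Proof.
move=> Hy Hz /andP [P1 P2] P3 HzA /andP [Hzy HyB].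
case: (ltngtP y A) => [HyA|HAy|EyA].
- apply: (unextended_values
            (P := ([:: 7; 2; 1; 4; 5; 3; 6], [:: false; true; true; false; false; false; false]))
            (vs := [:: E; y; z; B; C; A; D])) => //=;
  by repeat (apply/andP; split).
- apply: (unextended_values
            (P := ([:: 7; 3; 1; 4; 5; 2; 6], [:: false; true; true; false; false; false; false]))
            (vs := [:: E; y; z; B; C; A; D])) => //=;
  by repeat (apply/andP; split).
- by move: (ltn_trans (ltn_trans P2 P3) (ltn_trans PBC PCA)); rewrite EyA ltnn.
Qed.

Lemma unextended_8 w y z : w \in pi -> y \in pi -> z \in pi ->
  index w pi < index y pi < index E pi -> index E pi < index z pi < index B pi ->
  D < w -> z < A -> z < y < B -> False.
Proof.
move=> Hw Hy Hz /andP [P1 P2] /andP [P3 P4] HDw HzA /andP [Hzy HyB].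
have HyA : y != A.
  apply/eqP => EyA; move: (ltn_trans (ltn_trans P2 (ltn_trans P3 P4)) (ltn_trans PBC PCA)).
  by rewrite EyA ltnn.
have HwE : w != E by apply/eqP => EwE; move: (ltn_trans P1 P2); rewrite EwE ltnn.
move: HyA HwE; rewrite !neq_ltn => /orP [HyA|HAy] /orP [HwE|HEw].
- apply: (unextended_values
            (P := ([:: 7; 2; 8; 1; 4; 5; 3; 6],
                   [:: true; true; false; true; false; false; false; false]))
            (vs := [:: w; y; E; z; B; C; A; D])) => //=;
  by repeat (apply/andP; split).
- apply: (unextended_values
            (P := ([:: 8; 2; 7; 1; 4; 5; 3; 6],
                   [:: true; true; false; true; false; false; false; false]))
            (vs := [:: w; y; E; z; B; C; A; D])) => //=;
  by repeat (apply/andP; split).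
- apply: (unextended_values
            (P := ([:: 7; 3; 8; 1; 4; 5; 2; 6],
                   [:: true; true; false; true; false; false; false; false]))
            (vs := [:: w; y; E; z; B; C; A; D])) => //=;
  by repeat (apply/andP; split).
- apply: (unextended_values
            (P := ([:: 8; 3; 7; 1; 4; 5; 2; 6],
                   [:: true; true; false; true; false; false; false; false]))
            (vs := [:: w; y; E; z; B; C; A; D])) => //=;
  by repeat (apply/andP; split).
Qed.

Hypothesis Hp : is_perm pi.

Lemma unextended_not_sortable : ~ qlg2_sortable pi.
Proof.
apply: (not_sortable_of_invariant (Inv := stuck_52314 pi E B C A D)) => //.
- by apply: StuckPre; split => //; apply: Or41.
- move=> st st' HU HG; apply: stuck_52314_move => //.
  + exact: unextended_631425.
  + exact: unextended_7.
  + exact: unextended_8.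
- exact: stuck_52314_nonempty.
Qed.

End Unextended52314.

Lemma qlg2_sortable_extends_52314 pi : is_perm pi -> qlg2_sortable pi ->
  forall idx, occurrence [:: 5; 2; 3; 1; 4] pi idx ->
  exists2 P, P \in dotted_list & extends_to pi idx P.
Proof.
move=> Hp Hs idx Hocc; apply: NNPP.
have Hu : uniq pi by rewrite (perm_uniq Hp) iota_uniq.
have [vs [-> Hsz Hin Hpos Hval]] := occurrence_values (isT : is_perm [:: 5; 2; 3; 1; 4]) Hu Hocc.
case: vs Hsz Hin Hpos Hval => [|E [|B [|C [|A [|D [|]]]]]] //= _.
rewrite !andbT => /and5P [HEpi HBpi HCpi HApi HDpi] /and4P [PEB PBC PCA PAD].
move=> /and4P [HAB HBC HCD HDE] Hno.
by move: Hs; apply: (@unextended_not_sortable pi E B C A D).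
Qed.

Theorem mainTheorem13 (pi : seq nat) :
  is_perm pi -> qlg2_sortable pi ->
  avoids [:: 3; 2; 1; 4] pi /\
  (forall idx, occurrence [:: 5; 2; 3; 1; 4] pi idx ->
     exists2 P, P \in dotted_list & extends_to pi idx P).
Proof.
move=> Hp Hs; split.
- exact: qlg2_sortable_avoids_3214.
- exact: qlg2_sortable_extends_52314.
Qed.
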